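(* Let $n\ge 2$ be a power of two, $\ell\ge1$ an integer, and $N$ a positive integer multiple of $2n$. Then the distribution $\mathbf{D}_{n,\ell}$ can be sampled exactly by a sampler making two adaptive probes (per output bit) to independent uniform symbols from $[N]$.
   Context: Distribution $\mathbf{D}_{n,\ell}$: for $n\ge2$ a power of two and integer $\ell\ge1$, $\mathbf{D}_{n,\ell}$ is the distribution over $(\mathbf{i}^{(1)},\dots,\mathbf{i}^{(\ell)},\mathbf{x},\mathbf{y}^{(1)},\dots,\mathbf{y}^{(\ell)})\in\{0,1\}^{\ell\log n+(\ell+1)n}$ where each $\mathbf{i}^{(j)}$ is independently uniform on $\{0,1\}^{\log n}$ (identified with an element of $[n]$, equivalently of $\mathbb{Z}_n$, via a fixed bijection), $\mathbf{x}$ is uniform on $\{0,1\}^n$ independent of the shifts, and $\mathbf{y}^{(j)}_k=\mathbf{x}_{k+\mathbf{i}^{(j)}\bmod n}$ for all $j\in[\ell]$, $k\in[n]$ (indices of $\mathbf{x}$ taken modulo $n$). Logarithms are base 2. A sampler making two adaptive probes to independent uniform symbols from $[N]$ is given an arbitrarily long sequence $R_1,R_2,\dots$ of independent uniform elements of $[N]$; each output bit is computed by reading one symbol $R_a$ at a fixed position $a$ (depending only on the output index), then reading one symbol $R_b$ whose position $b$ may depend on the value of $R_a$, and outputting a function of the two read values; it samples $\mathbf{D}$ exactly if its output distribution equals $\mathbf{D}$. *)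

From mathcomp Require Import all_boot all_order all_algebra.
Set Implicit Arguments. Unset Strict Implicit. Unset Printing Implicit Defensive.
Import Order.TTheory GRing.Theory Num.Theory.

(* n = 2^k, so log n = k. *)
Lemma pow2_gt0 (k : nat) : 0 < 2 ^ k.
Proof. by rewrite expn_gt0. Qed.

(* Output coordinates of D_{n,l}:
   inl (inl (j,t)) : bit t of i^(j)      (j < l, t < log n)
   inl (inr m)     : x_m                 (m < n)
   inr (j,m)       : y^(j)_m             (j < l, m < n) *)
Definition out_idx (k l : nat) : finType :=
  ((('I_l * 'I_k) + 'I_(2 ^ k)) + ('I_l * 'I_(2 ^ k)))%type.

Definition shift_idx (k : nat) (m s : 'I_(2 ^ k)) : 'I_(2 ^ k) :=
  Ordinal (ltn_pmod (m + s) (pow2_gt0 k)).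

(* The deterministic map (i^(1..l), x) |-> sample of D_{n,l}.
   The fixed bijection {0,1}^{log n} <-> [n] is binary representation:
   bit t of i is odd (i / 2^t). *)
Definition D_map (k l : nat) (i : {ffun 'I_l -> 'I_(2 ^ k)})
    (x : {ffun 'I_(2 ^ k) -> bool}) : {ffun out_idx k l -> bool} :=
  [ffun o : out_idx k l =>
     match o with
     | inl (inl (j, t)) => odd (i j %/ 2 ^ t)
     | inl (inr m) => x m
     | inr (j, m) => x (shift_idx m (i j))
     end].

Definition D_prob (k l : nat) (w : {ffun out_idx k l -> bool}) : rat :=
  ((#|[set p : ({ffun 'I_l -> 'I_(2 ^ k)} * {ffun 'I_(2 ^ k) -> bool})%type
        | D_map p.1 p.2 == w]|)%:R
  / (#|{: ({ffun 'I_l -> 'I_(2 ^ k)} * {ffun 'I_(2 ^ k) -> bool})%type}|)%:R)%R.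

(* A two-adaptive-probe sampler reading symbols R_0..R_{M-1} in [N]:
   output bit o is f o (R (a o)) (R (b o (R (a o)))). *)
Definition sampler_out (O : finType) (N M : nat) (a : O -> 'I_M)
    (b : O -> 'I_N -> 'I_M) (f : O -> 'I_N -> 'I_N -> bool)
    (R : {ffun 'I_M -> 'I_N}) : {ffun O -> bool} :=
  [ffun o => f o (R (a o)) (R (b o (R (a o))))].

Definition sampler_prob (O : finType) (N M : nat) (a : O -> 'I_M)
    (b : O -> 'I_N -> 'I_M) (f : O -> 'I_N -> 'I_N -> bool)
    (w : {ffun O -> bool}) : rat :=
  ((#|[set R : {ffun 'I_M -> 'I_N} | sampler_out a b f R == w]|)%:R
  / (#|{: {ffun 'I_M -> 'I_N}}|)%:R)%R.

From mathcomp Require Import all_boot all_order all_algebra.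
From mathcomp Require Import zify.
Import GRing.Theory Num.Theory.

Set Implicit Arguments.
Unset Strict Implicit.

(* The sampler reads l "shift" symbols and n = 2^k "data" symbols.  Reducing a
   shift symbol mod n gives i^(j), and the parity of the m-th data symbol gives
   x_m.  The bit y^(j)_m = x_(m + i^(j)) is produced adaptively: the first probe
   reads the j-th shift symbol, the second probe the data symbol it points to.
   Since n and 2 divide N, every fibre of the decoding map (symbols -> (i, x))
   has the same size, so the decoded pair is uniform and the output is D_{n,l}. *)

Lemma card_ord_modn_eq (N d c : nat) : 0 < d -> d %| N -> c < d ->
  #|[pred y : 'I_N | y %% d == c]| = N %/ d.
Proof.
case: N => [|N] d_gt0 dvd_dN lt_cd.
  by rewrite div0n; apply: eq_card0 => -[].
pose g (q : 'I_(N.+1 %/ d)) : 'I_N.+1 := inord (q * d + c).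
have gE (q : 'I_(N.+1 %/ d)) : g q = q * d + c :> nat.
  rewrite inordK //; have := ltn_ord q; move: (val q) => q'.
  move/dvdnP: dvd_dN => [e ->]; rewrite mulnK // => lt_qe.
  have : q'.+1 * d <= e * d by rewrite leq_mul2r lt_qe orbT.
  by rewrite mulSn; lia.
have g_inj : injective g.
  move=> q1 q2 /(congr1 val); rewrite /= !gE => /eqP.
  by rewrite eqn_add2r eqn_pmul2r // => /eqP/val_inj.
rewrite -[RHS]card_ord -(card_imset _ g_inj); apply: eq_card => y; rewrite inE /=.
apply/eqP/imsetP => [y_mod|[q _ ->]]; last by rewrite gE modnMDl modn_small.
have lt_yN : y %/ d < N.+1 %/ d by rewrite ltn_divLR // divnK.
by exists (Ordinal lt_yN) => //; apply: val_inj; rewrite /= gE /= -y_mod -divn_eq.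
Qed.

Lemma card_ffun_family (aT rT : finType) (F : aT -> pred rT) :
  #|[set f : {ffun aT -> rT} | [forall i, f i \in F i]]| = \prod_i #|F i|.
Proof.
have -> : #|[set f : {ffun aT -> rT} | [forall i, f i \in F i]]| = #|family F|.
  by apply: eq_card => f; rewrite inE; apply/forallP/familyP.
by rewrite card_family foldrE big_map big_enum.
Qed.

Section UniformFibres.

Variables (A B : finType) (phi : A -> B) (s : nat).
Hypothesis card_fibre : forall p, #|[set x | phi x == p]| = s.

Lemma card_preim_uniform (g : pred B) :
  #|[set x | g (phi x)]| = s * #|[set p | g p]|.
Proof.
rewrite -!sum1_card (partition_big phi g) /=; last by move=> x; rewrite inE.
rewrite big_distrr /=; apply: eq_big => [p|p gp]; first by rewrite inE.
rewrite muln1 -(card_fibre p) -sum1_card; apply: eq_bigl => x; rewrite !inE.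
by case: (phi x =P p) => [->|]; rewrite ?gp ?andbF.
Qed.

Lemma ratio_preim_uniform (R : numFieldType) (g : pred B) : 0 < s ->
  (#|[set x | g (phi x)]|%:R / #|A|%:R = #|[set p | g p]|%:R / #|B|%:R :> R)%R.
Proof.
move=> s_gt0; rewrite card_preim_uniform -[#|A|]cardsT -[#|B|]cardsT.
rewrite [#|[set: A]|](@card_preim_uniform predT) !cardsE !natrM -mulf_div.
by rewrite divff ?mul1r // pnatr_eq0 -lt0n.
Qed.

End UniformFibres.

Definition ord_mod_pow2 (k N : nat) (r : 'I_N) : 'I_(2 ^ k) :=
  Ordinal (ltn_pmod r (pow2_gt0 k)).

(* Symbol positions: lshift j is the j-th shift symbol, rshift m the m-th data
   symbol. *)
Definition shift_probe1 (k l : nat) (o : out_idx k l) : 'I_(l + 2 ^ k) :=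
  match o with
  | inl (inl (j, _)) => lshift _ j
  | inl (inr m) => rshift _ m
  | inr (j, _) => lshift _ j
  end.

Definition shift_probe2 (k l N : nat) (o : out_idx k l) (r : 'I_N) : 'I_(l + 2 ^ k) :=
  match o with
  | inr (_, m) => rshift l (shift_idx m (ord_mod_pow2 k r))
  | _ => shift_probe1 o
  end.

Definition shift_output (k l N : nat) (o : out_idx k l) (r1 r2 : 'I_N) : bool :=
  match o with
  | inl (inl (_, t)) => odd ((r1 %% 2 ^ k) %/ 2 ^ t)
  | inl (inr _) => odd r1
  | inr _ => odd r2
  end.

Definition decode_symbols (k l N : nat) (R : {ffun 'I_(l + 2 ^ k) -> 'I_N}) :
  ({ffun 'I_l -> 'I_(2 ^ k)} * {ffun 'I_(2 ^ k) -> bool})%type :=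
  ([ffun j => ord_mod_pow2 k (R (lshift _ j))], [ffun m => odd (R (rshift _ m))]).

Lemma sampler_out_shift (k l N : nat) (R : {ffun 'I_(l + 2 ^ k) -> 'I_N}) :
  sampler_out (@shift_probe1 k l) (@shift_probe2 k l N) (@shift_output k l N) R
  = D_map (decode_symbols R).1 (decode_symbols R).2.
Proof. by apply/ffunP => -[[[j t]|m]|[j m]]; rewrite !ffunE. Qed.

Definition decode_constraint (k l N : nat) (i : {ffun 'I_l -> 'I_(2 ^ k)})
    (x : {ffun 'I_(2 ^ k) -> bool}) (p : 'I_(l + 2 ^ k)) : pred 'I_N :=
  match split p with
  | inl j => [pred r : 'I_N | r %% 2 ^ k == i j]
  | inr m => [pred r : 'I_N | r %% 2 == x m]
  end.

Lemma decode_symbols_eq (k l N : nat) i x :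
  [set R | @decode_symbols k l N R == (i, x)] =
  [set R : {ffun 'I_(l + 2 ^ k) -> 'I_N} | [forall p, R p \in decode_constraint i x p]].
Proof.
apply/setP => R; rewrite !inE xpair_eqE; apply/andP/forallP.
  move=> [/eqP <- /eqP <-] p; rewrite /decode_constraint -(splitK p).
  by case: (split p) => [j|m]; rewrite unsplitK inE ffunE //= modn2.
move=> R_con; split; apply/eqP/ffunP.
  move=> j; rewrite ffunE; apply: val_inj.
  by move: (R_con (lshift _ j)); rewrite /decode_constraint (unsplitK (inl j)) inE => /eqP.
move=> m; rewrite ffunE.
move: (R_con (rshift _ m)); rewrite /decode_constraint (unsplitK (inr m)) inE modn2.
by case: odd; case: (x m).
Qed.

Lemma card_decode_fibre (k l N : nat) : 2 ^ k %| N -> 2 %| N -> forall p,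
  #|[set R | @decode_symbols k l N R == p]| = (N %/ 2 ^ k) ^ l * (N %/ 2) ^ 2 ^ k.
Proof.
move=> dvd_nN dvd_2N [i x]; rewrite decode_symbols_eq card_ffun_family big_split_ord.
rewrite (eq_bigr (fun _ => N %/ 2 ^ k)) => [|j _]; last first.
  by rewrite /decode_constraint (unsplitK (inl j)) card_ord_modn_eq ?pow2_gt0.
rewrite [X in _ * X = _](eq_bigr (fun _ => N %/ 2)) => [|m _]; last first.
  by rewrite /decode_constraint (unsplitK (inr m)) card_ord_modn_eq //; case: (x m).
by rewrite !prod_nat_const !card_ord.
Qed.

Theorem claim2 (k l N : nat) :
  1 <= k -> 1 <= l -> 0 < N -> (2 * 2 ^ k %| N) ->
  exists (M : nat) (a : out_idx k l -> 'I_M)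
         (b : out_idx k l -> 'I_N -> 'I_M)
         (f : out_idx k l -> 'I_N -> 'I_N -> bool),
    forall w : {ffun out_idx k l -> bool},
      sampler_prob a b f w = D_prob w.
Proof.
move=> _ _ N_gt0 dvd_2nN.
exists (l + 2 ^ k), (@shift_probe1 k l), (@shift_probe2 k l N), (@shift_output k l N).
move=> w; rewrite /sampler_prob /D_prob.
have dvd_nN : 2 ^ k %| N by apply: dvdn_trans dvd_2nN; apply: dvdn_mull.
have dvd_2N : 2 %| N by apply: dvdn_trans dvd_2nN; apply: dvdn_mulr.
have fibre_gt0 : 0 < (N %/ 2 ^ k) ^ l * (N %/ 2) ^ 2 ^ k.
  rewrite muln_gt0 !expn_gt0 !divn_gt0 ?pow2_gt0 //.
  by rewrite (dvdn_leq N_gt0 dvd_nN) (dvdn_leq N_gt0 dvd_2N).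
under eq_finset => R do rewrite sampler_out_shift.
exact: (ratio_preim_uniform (card_decode_fibre (l:=l) dvd_nN dvd_2N) _ _ fibre_gt0).
Qed.
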